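(* In a generalised differential Seely category, for every $X\in\mathscr C$ and $A\in\mathcal L$, the morphism $\partial^X_A:(X,!A\otimes A)\to(X,!A)$ satisfies the linear rule in the fibre over $X$: $\partial^X_A;\mathbf d^X_A=\mathbf w^X_A\otimes_X\mathrm{id}_{(X,A)}$.
   Context: Composition is diagrammatic; monoidal categories are strict. Setting: an LNL adjunction $\mathcal F\dashv\mathcal U$, $\mathcal F:\mathscr C\to\mathcal L$, between cartesian $(\mathscr C,\times,I)$ and symmetric monoidal $(\mathcal L,\otimes,1)$ (symmetry $\sigma$); $\mathcal U$ lax monoidal via $n_{A,B}$; $\mathcal F$ strong monoidal via isomorphisms $m_{X,Y}:\mathcal F(X)\otimes\mathcal F(Y)\to\mathcal F(X\times Y)$, $m_1$; unit $\eta$, counit $\mathbf d$, comonad $!=\mathcal F\mathcal U$; $\mathbf c_X:=\mathcal F(\Delta_X);m_{X,X}^{-1}$, $\mathbf w_X:=\mathcal F(t_X);m_1^{-1}$; $\mathbf c_A:=\mathbf c_{\mathcal U(A)}$, $\mathbf w_A:=\mathbf w_{\mathcal U(A)}$. $LS(\mathscr C)$: objects $(X,A)$; morphisms $(f,u):(X,A)\to(Y,B)$ with $f:X\to Y$, $u:\mathcal F(X)\otimes A\to B$; composition $(f,u);(g,v)=(f;g,(\mathbf c_X\otimes\mathrm{id}_A);(\mathcal F(f)\otimes u);v)$; identity $(\mathrm{id}_X,\mathbf w_X\otimes\mathrm{id}_A)$; $\mathbf{ls}(f,u)=f$; fibre $LS(\mathscr C)_X$ = objects $(X,A)$, morphisms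 $(\mathrm{id}_X,u)$, with $(X,A)\otimes_X(X,B)=(X,A\otimes B)$ and $(\mathrm{id}_X,u)\otimes_X(\mathrm{id}_X,v)=(\mathrm{id}_X,(\mathbf c_X\otimes\mathrm{id});(\mathrm{id}\otimes\sigma_{\mathcal F(X),A}\otimes\mathrm{id});(u\otimes v))$. With biproducts $\oplus$ in $\mathcal L$: fibrewise injections $\iota^X_i=(\mathrm{id}_X,\mathbf w_X\otimes\iota_i)$; products in $LS(\mathscr C)$: $(X\times Y,A\oplus B)$, projections $(\pi_i,\mathbf w_{X\times Y}\otimes\pi_i)$. GDSC: $\mathcal L$ additive (CMon-enriched, $\otimes$ bilinear) with finite products, and $\mathcal T:\mathscr C\to LS(\mathscr C)$ with: (t.1) $\mathbf{ls}\circ\mathcal T=\mathrm{id}$, $\mathcal T(X)=(X,\lambda(X))$, and $\varphi_{X,Y}:=\langle\mathcal T(\pi_1),\mathcal T(\pi_2)\rangle:\mathcal T(X\times Y)\to(X\times Y,\lambda(X)\oplus\lambda(Y))$ iso; (t.2) $\mathcal T(\mathcal U(A))=(\mathcal U(A),A)$; (t.3) with $i^{X,Y}_2:=\iota^{X\times Y}_2;\varphi^{-1}_{X,Y}$, $⦃(f,u)⦄:=\langle\pi_1;f,(\eta_X\times\mathrm{id});n_{\mathcal F(X),A};\mathcal U(u)\rangle$, $W(f,u):=(⦃(f,u)⦄,(\mathcal F(\pi_1)\otimes\mathrm{id}_A);u)$: $W(f,u);i^{Y,\mathcal U(B)}_2=i^{X,\mathcal U(A)}_2;\mathcal T(⦃(f,u)⦄)$.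 Differential: for $h:X\to Y$ with $\mathcal T(h)=(h,v)$, $\mathrm D(h):=(\mathrm{id}_X,v)$; for $h:X\times Y\to Z$, $\mathrm D_2(h):=i^{X,Y}_2;\mathrm D(h)$. $\mathscr D^X_A:=\mathrm D_2(\pi_2;\eta_{\mathcal U(A)}):(X\times\mathcal U(A),A)\to(X\times\mathcal U(A),!A)$. The functor $\Sigma_{(X,A)}:LS(\mathscr C)_{X\times\mathcal U(A)}\to LS(\mathscr C)_X$: $(X\times\mathcal U(A),B)\mapsto(X,!A\otimes B)$, $(\mathrm{id},u)\mapsto(\mathrm{id}_X,(\mathrm{id}_{\mathcal F(X)}\otimes\mathbf c_A\otimes\mathrm{id}_B);(\sigma_{\mathcal F(X),!A}\otimes\mathrm{id}_{!A\otimes B});(\mathrm{id}_{!A}\otimes((m_{X,\mathcal U(A)}\otimes\mathrm{id}_B);u)))$. $\mu^{(X,A)}_{(X,B)}:=(\mathrm{id}_X,\mathbf w_X\otimes\mathbf w_A\otimes\mathrm{id}_B):(X,!A\otimes B)\to(X,B)$. Deriving transform: $\partial^X_A:=\Sigma_{(X,A)}(\mathscr D^X_A);\mu^{(X,A)}_{(X,!A)}:(X,!A\otimes A)\to(X,!A)$. Fibrewise structure: $\mathbf d^X_A:=(\mathrm{id}_X,\mathbf w_X\otimes\mathbf d_A):(X,!A)\to(X,A)$, $\mathbf w^X_A:=(\mathrm{id}_X,\mathbf w_X\otimes\mathbf w_A):(X,!A)\to(X,1)$. *)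

(* Categories are presented "untyped": a type of objects, a type of ALL
   morphisms, domain/codomain maps and a total composition operation whose
   laws are only assumed on composable pairs.  This makes the strictness of
   the monoidal structure on L expressible as plain equations. Composition is
   diagrammatic: [f ;; g] is "first f, then g". *)

Set Implicit Arguments.

Record Cat := mkCat {
  ob : Type;
  mor : Type;
  dom : mor -> ob;
  cod : mor -> ob;
  idm : ob -> mor;
  cmp : mor -> mor -> mor;
  dom_idm : forall a, dom (idm a) = a;
  cod_idm : forall a, cod (idm a) = a;
  dom_cmp : forall f g, cod f = dom g -> dom (cmp f g) = dom f;
  cod_cmp : forall f g, cod f = dom g -> cod (cmp f g) = cod g;
  cmp_idl : forall f, cmp (idm (dom f)) f = f;
  cmp_idr : forall f, cmp f (idm (cod f)) = f;
  cmp_assoc : forall f g h, cod f = dom g -> cod g = dom h ->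
      cmp (cmp f g) h = cmp f (cmp g h)
}.
Arguments dom {c} _.
Arguments cod {c} _.
Arguments idm {c} _.
Arguments cmp {c} _ _.

Notation "f ;; g" := (cmp f g) (at level 40, left associativity).

Definition Hom {c : Cat} (f : mor c) (a b : ob c) : Prop := dom f = a /\ cod f = b.

Record CartCat := {
  cc : Cat;
  prd : ob cc -> ob cc -> ob cc;
  trm : ob cc;
  p1 : ob cc -> ob cc -> mor cc;
  p2 : ob cc -> ob cc -> mor cc;
  pr : mor cc -> mor cc -> mor cc;
  bng : ob cc -> mor cc;
  p1_hom : forall X Y, Hom (p1 X Y) (prd X Y) X;
  p2_hom : forall X Y, Hom (p2 X Y) (prd X Y) Y;
  pr_hom : forall f g, dom f = dom g -> Hom (pr f g) (dom f) (prd (cod f) (cod g));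
  pr_p1 : forall f g, dom f = dom g -> pr f g ;; p1 (cod f) (cod g) = f;
  pr_p2 : forall f g, dom f = dom g -> pr f g ;; p2 (cod f) (cod g) = g;
  pr_eta : forall h X Y, cod h = prd X Y -> pr (h ;; p1 X Y) (h ;; p2 X Y) = h;
  bng_hom : forall X, Hom (bng X) X trm;
  bng_uniq : forall h, cod h = trm -> h = bng (dom h)
}.
Arguments prd {_} _ _.
Arguments trm {_}.
Arguments p1 {_} _ _.
Arguments p2 {_} _ _.
Arguments pr {_} _ _.
Arguments bng {_} _.

Section CartDefs.
Variable K : CartCat.
Definition prm (f g : mor (cc K)) : mor (cc K) :=
  pr (p1 (dom f) (dom g) ;; f) (p2 (dom f) (dom g) ;; g).
Definition diag (X : ob (cc K)) : mor (cc K) := pr (idm X) (idm X).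
Definition swp (X Y : ob (cc K)) : mor (cc K) := pr (p2 X Y) (p1 X Y).
Definition assc (X Y Z : ob (cc K)) : mor (cc K) :=
  pr (p1 (prd X Y) Z ;; p1 X Y) (pr (p1 (prd X Y) Z ;; p2 X Y) (p2 (prd X Y) Z)).
End CartDefs.
Arguments prm {K} _ _.
Arguments diag {K} _.
Arguments swp {K} _ _.
Arguments assc {K} _ _ _.

(* A strict symmetric monoidal category which is additive (CMon-enriched,
   tensor bilinear) with finite products (= biproducts, plus a zero object). *)
Record AddSMCat := {
  sc : Cat;
  tn : ob sc -> ob sc -> ob sc;
  un : ob sc;
  tm : mor sc -> mor sc -> mor sc;
  sg : ob sc -> ob sc -> mor sc;
  tm_dom : forall f g, dom (tm f g) = tn (dom f) (dom g);
  tm_cod : forall f g, cod (tm f g) = tn (cod f) (cod g);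
  tm_id : forall a b, tm (idm a) (idm b) = idm (tn a b);
  tm_cmp : forall f f' g g', cod f = dom g -> cod f' = dom g' ->
      tm (f ;; g) (f' ;; g') = tm f f' ;; tm g g';
  tn_assoc : forall a b c, tn (tn a b) c = tn a (tn b c);
  tn_unl : forall a, tn un a = a;
  tn_unr : forall a, tn a un = a;
  tm_assoc : forall f g h, tm (tm f g) h = tm f (tm g h);
  tm_unl : forall f, tm (idm un) f = f;
  tm_unr : forall f, tm f (idm un) = f;
  sg_hom : forall a b, Hom (sg a b) (tn a b) (tn b a);
  sg_nat : forall f g, tm f g ;; sg (cod f) (cod g) = sg (dom f) (dom g) ;; tm g f;
  sg_inv : forall a b, sg a b ;; sg b a = idm (tn a b);
  sg_hex : forall a b c, sg a (tn b c) = tm (sg a b) (idm c) ;; tm (idm b) (sg a c);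
  zr : ob sc -> ob sc -> mor sc;
  ad : mor sc -> mor sc -> mor sc;
  zr_hom : forall a b, Hom (zr a b) a b;
  ad_hom : forall f g a b, Hom f a b -> Hom g a b -> Hom (ad f g) a b;
  ad_comm : forall f g a b, Hom f a b -> Hom g a b -> ad f g = ad g f;
  ad_assoc : forall f g h a b, Hom f a b -> Hom g a b -> Hom h a b ->
      ad (ad f g) h = ad f (ad g h);
  ad_zr : forall f a b, Hom f a b -> ad f (zr a b) = f;
  cmp_adl : forall f g h a b, Hom f a b -> Hom g a b -> dom h = b ->
      ad f g ;; h = ad (f ;; h) (g ;; h);
  cmp_adr : forall f g h a b, Hom f a b -> Hom g a b -> cod h = a ->
      h ;; ad f g = ad (h ;; f) (h ;; g);
  cmp_zrl : forall a b h, dom h = b -> zr a b ;; h = zr a (cod h);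
  cmp_zrr : forall a b h, cod h = a -> h ;; zr a b = zr (dom h) b;
  tm_adl : forall f g h a b, Hom f a b -> Hom g a b ->
      tm (ad f g) h = ad (tm f h) (tm g h);
  tm_adr : forall f g h a b, Hom f a b -> Hom g a b ->
      tm h (ad f g) = ad (tm h f) (tm h g);
  tm_zrl : forall a b h, tm (zr a b) h = zr (tn a (dom h)) (tn b (cod h));
  tm_zrr : forall a b h, tm h (zr a b) = zr (tn (dom h) a) (tn (cod h) b);
  bp : ob sc -> ob sc -> ob sc;
  i1 : ob sc -> ob sc -> mor sc;
  i2 : ob sc -> ob sc -> mor sc;
  q1 : ob sc -> ob sc -> mor sc;
  q2 : ob sc -> ob sc -> mor sc;
  i1_hom : forall a b, Hom (i1 a b) a (bp a b);
  i2_hom : forall a b, Hom (i2 a b) b (bp a b);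
  q1_hom : forall a b, Hom (q1 a b) (bp a b) a;
  q2_hom : forall a b, Hom (q2 a b) (bp a b) b;
  i1_q1 : forall a b, i1 a b ;; q1 a b = idm a;
  i2_q2 : forall a b, i2 a b ;; q2 a b = idm b;
  i1_q2 : forall a b, i1 a b ;; q2 a b = zr a b;
  i2_q1 : forall a b, i2 a b ;; q1 a b = zr b a;
  bp_id : forall a b, ad (q1 a b ;; i1 a b) (q2 a b ;; i2 a b) = idm (bp a b);
  zo : ob sc;
  zo_id : idm zo = zr zo zo
}.
Arguments tn {_} _ _.
Arguments un {_}.
Arguments tm {_} _ _.
Arguments sg {_} _ _.
Arguments zr {_} _ _.
Arguments ad {_} _ _.
Arguments bp {_} _ _.
Arguments i1 {_} _ _.
Arguments i2 {_} _ _.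
Arguments q1 {_} _ _.
Arguments q2 {_} _ _.
Arguments zo {_}.

(* LNL adjunction F -| U : L -> C, F strong symmetric monoidal,
   U lax symmetric monoidal, unit and counit monoidal. *)
Record LNL := {
  LC : CartCat;
  LL : AddSMCat;
  Fo : ob (cc LC) -> ob (sc LL);
  Fm : mor (cc LC) -> mor (sc LL);
  Uo : ob (sc LL) -> ob (cc LC);
  Um : mor (sc LL) -> mor (cc LC);
  Fm_dom : forall f, dom (Fm f) = Fo (dom f);
  Fm_cod : forall f, cod (Fm f) = Fo (cod f);
  Fm_id : forall X, Fm (idm X) = idm (Fo X);
  Fm_cmp : forall f g, cod f = dom g -> Fm (f ;; g) = Fm f ;; Fm g;
  Um_dom : forall f, dom (Um f) = Uo (dom f);
  Um_cod : forall f, cod (Um f) = Uo (cod f);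
  Um_id : forall A, Um (idm A) = idm (Uo A);
  Um_cmp : forall f g, cod f = dom g -> Um (f ;; g) = Um f ;; Um g;
  et : ob (cc LC) -> mor (cc LC);
  ep : ob (sc LL) -> mor (sc LL);
  et_hom : forall X, Hom (et X) X (Uo (Fo X));
  ep_hom : forall A, Hom (ep A) (Fo (Uo A)) A;
  et_nat : forall f, f ;; et (cod f) = et (dom f) ;; Um (Fm f);
  ep_nat : forall g, Fm (Um g) ;; ep (cod g) = ep (dom g) ;; g;
  tri1 : forall X, Fm (et X) ;; ep (Fo X) = idm (Fo X);
  tri2 : forall A, et (Uo A) ;; Um (ep A) = idm (Uo A);
  mm : ob (cc LC) -> ob (cc LC) -> mor (sc LL);
  mmi : ob (cc LC) -> ob (cc LC) -> mor (sc LL);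
  m1 : mor (sc LL);
  m1i : mor (sc LL);
  mm_hom : forall X Y, Hom (mm X Y) (tn (Fo X) (Fo Y)) (Fo (prd X Y));
  mmi_hom : forall X Y, Hom (mmi X Y) (Fo (prd X Y)) (tn (Fo X) (Fo Y));
  mm_mmi : forall X Y, mm X Y ;; mmi X Y = idm (tn (Fo X) (Fo Y));
  mmi_mm : forall X Y, mmi X Y ;; mm X Y = idm (Fo (prd X Y));
  m1_hom : Hom m1 un (Fo trm);
  m1i_hom : Hom m1i (Fo trm) un;
  m1_m1i : m1 ;; m1i = idm un;
  m1i_m1 : m1i ;; m1 = idm (Fo trm);
  mm_nat : forall f g, tm (Fm f) (Fm g) ;; mm (cod f) (cod g)
                       = mm (dom f) (dom g) ;; Fm (prm f g);
  mm_assoc : forall X Y Z,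
      tm (mm X Y) (idm (Fo Z)) ;; mm (prd X Y) Z ;; Fm (assc X Y Z)
      = tm (idm (Fo X)) (mm Y Z) ;; mm X (prd Y Z);
  mm_unl : forall X, tm m1 (idm (Fo X)) ;; mm trm X ;; Fm (p2 trm X) = idm (Fo X);
  mm_unr : forall X, tm (idm (Fo X)) m1 ;; mm X trm ;; Fm (p1 X trm) = idm (Fo X);
  mm_sym : forall X Y, sg (Fo X) (Fo Y) ;; mm Y X = mm X Y ;; Fm (swp X Y);
  nn : ob (sc LL) -> ob (sc LL) -> mor (cc LC);
  n0 : mor (cc LC);
  nn_hom : forall A B, Hom (nn A B) (prd (Uo A) (Uo B)) (Uo (tn A B));
  n0_hom : Hom n0 trm (Uo un);
  nn_nat : forall f g, prm (Um f) (Um g) ;; nn (cod f) (cod g)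
                       = nn (dom f) (dom g) ;; Um (tm f g);
  nn_assoc : forall A B D,
      prm (nn A B) (idm (Uo D)) ;; nn (tn A B) D
      = assc (Uo A) (Uo B) (Uo D) ;; prm (idm (Uo A)) (nn B D) ;; nn A (tn B D);
  nn_unl : forall A, prm n0 (idm (Uo A)) ;; nn un A = p2 trm (Uo A);
  nn_unr : forall A, prm (idm (Uo A)) n0 ;; nn A un = p1 (Uo A) trm;
  nn_sym : forall A B, swp (Uo A) (Uo B) ;; nn B A = nn A B ;; Um (sg A B);
  et_mon : forall X Y, prm (et X) (et Y) ;; nn (Fo X) (Fo Y) ;; Um (mm X Y) = et (prd X Y);
  et_mon1 : n0 ;; Um m1 = et trm;
  ep_mon : forall A B, mm (Uo A) (Uo B) ;; Fm (nn A B) ;; ep (tn A B) = tm (ep A) (ep B);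
  ep_mon1 : m1 ;; Fm n0 ;; ep un = idm un
}.

Section LNLDefs.
Variable G : LNL.
Local Notation CO := (ob (cc (LC G))).
Local Notation CM := (mor (cc (LC G))).
Local Notation LO := (ob (sc (LL G))).
Local Notation LM := (mor (sc (LL G))).

Definition wX (X : CO) : LM := Fm G (bng X) ;; m1i G.
Definition cX (X : CO) : LM := Fm G (diag X) ;; mmi G X X.
Definition bang (A : LO) : LO := Fo G (Uo G A).
Definition wA (A : LO) : LM := wX (Uo G A).
Definition cA (A : LO) : LM := cX (Uo G A).

(* Morphisms of LS(C): (f,u) : (X,A) -> (Y,B) with f : X -> Y in C and
   u : F(X) (x) A -> B in L.  The source component A is stored explicitly. *)
Record LSMor := mkLS { lsf : CM; lssrc : LO; lsu : LM }.

Definition LSHom (p : LSMor) (X : CO) (A : LO) (Y : CO) (B : LO) : Prop :=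
  Hom (lsf p) X Y /\ lssrc p = A /\ Hom (lsu p) (tn (Fo G X) A) B.

Definition LSid (X : CO) (A : LO) : LSMor := mkLS (idm X) A (tm (wX X) (idm A)).

Definition LScmp (p q : LSMor) : LSMor :=
  mkLS (lsf p ;; lsf q) (lssrc p)
       (tm (cX (dom (lsf p))) (idm (lssrc p)) ;; tm (Fm G (lsf p)) (lsu p) ;; lsu q).

Definition LSpair (p q : LSMor) : LSMor :=
  mkLS (pr (lsf p) (lsf q)) (lssrc p)
       (ad (lsu p ;; i1 (cod (lsu p)) (cod (lsu q)))
           (lsu q ;; i2 (cod (lsu p)) (cod (lsu q)))).

Definition fib_i2 (Z : CO) (A B : LO) : LSMor := mkLS (idm Z) B (tm (wX Z) (i2 A B)).

Definition fibtens (X : CO) (p q : LSMor) : LSMor :=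
  mkLS (idm X) (tn (lssrc p) (lssrc q))
       (tm (cX X) (idm (tn (lssrc p) (lssrc q)))
        ;; tm (idm (Fo G X)) (tm (sg (Fo G X) (lssrc p)) (idm (lssrc q)))
        ;; tm (lsu p) (lsu q)).

(* the functor T given by lam and Tv : T(f) = (f, Tv f) : (X, lam X) -> (Y, lam Y) *)
Definition Tmor (lam : CO -> LO) (Tv : CM -> LM) (f : CM) : LSMor :=
  mkLS f (lam (dom f)) (Tv f).

Definition phi (lam : CO -> LO) (Tv : CM -> LM) (X Y : CO) : LSMor :=
  LSpair (Tmor lam Tv (p1 X Y)) (Tmor lam Tv (p2 X Y)).

Definition i2XY (lam : CO -> LO) (phinv : CO -> CO -> LSMor) (X Y : CO) : LSMor :=
  LScmp (fib_i2 (prd X Y) (lam X) (lam Y)) (phinv X Y).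

Definition brace (p : LSMor) : CM :=
  pr (p1 (dom (lsf p)) (Uo G (lssrc p)) ;; lsf p)
     (prm (et G (dom (lsf p))) (idm (Uo G (lssrc p)))
      ;; nn G (Fo G (dom (lsf p))) (lssrc p) ;; Um G (lsu p)).

Definition Wm (p : LSMor) : LSMor :=
  mkLS (brace p) (lssrc p)
       (tm (Fm G (p1 (dom (lsf p)) (Uo G (lssrc p)))) (idm (lssrc p)) ;; lsu p).
End LNLDefs.

Arguments mkLS {G} _ _ _.
Arguments Tmor {G} _ _ _.
Arguments phi {G} _ _ _ _.
Arguments i2XY {G} _ _ _ _.
Arguments fibtens {G} _ _ _.
Arguments LScmp {G} _ _.
Arguments LSpair {G} _ _.
Arguments brace {G} _.
Arguments Wm {G} _.

Record GDSC := {
  base : LNL;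
  lam : ob (cc (LC base)) -> ob (sc (LL base));
  Tv : mor (cc (LC base)) -> mor (sc (LL base));
  (* T is a functor C -> LS(C) with ls o T = id  (t.1, first part) *)
  Tv_hom : forall f, Hom (Tv f) (tn (Fo base (dom f)) (lam (dom f))) (lam (cod f));
  T_id : forall X, Tmor lam Tv (idm X) = LSid base X (lam X);
  T_cmp : forall f g, cod f = dom g ->
      Tmor lam Tv (f ;; g) = LScmp (Tmor lam Tv f) (Tmor lam Tv g);
  phinv : ob (cc (LC base)) -> ob (cc (LC base)) -> LSMor base;
  phinv_hom : forall X Y,
      LSHom (phinv X Y) (prd X Y) (bp (lam X) (lam Y)) (prd X Y) (lam (prd X Y));
  phi_phinv : forall X Y,
      LScmp (phi lam Tv X Y) (phinv X Y) = LSid base (prd X Y) (lam (prd X Y));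
  phinv_phi : forall X Y,
      LScmp (phinv X Y) (phi lam Tv X Y) = LSid base (prd X Y) (bp (lam X) (lam Y));
  t2 : forall A, lam (Uo base A) = A;
  t3 : forall p : LSMor base,
      dom (lsu p) = tn (Fo base (dom (lsf p))) (lssrc p) ->
      LScmp (Wm p) (i2XY lam phinv (cod (lsf p)) (Uo base (cod (lsu p))))
      = LScmp (i2XY lam phinv (dom (lsf p)) (Uo base (lssrc p)))
              (Tmor lam Tv (brace p))
}.

Section GDefs.
Variable G : GDSC.
Local Notation B := (base G).
Local Notation CO := (ob (cc (LC B))).
Local Notation CM := (mor (cc (LC B))).
Local Notation LO := (ob (sc (LL B))).

Definition Dd (h : CM) : LSMor B := mkLS (idm (dom h)) (lam G (dom h)) (Tv G h).
Definition D2 (X Y : CO) (h : CM) : LSMor B := LScmp (i2XY (lam G) (phinv G) X Y) (Dd h).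
Definition Dcal (X : CO) (A : LO) : LSMor B :=
  D2 X (Uo B A) (p2 X (Uo B A) ;; et B (Uo B A)).

Definition Sigma (X : CO) (A : LO) (p : LSMor B) : LSMor B :=
  mkLS (idm X) (tn (bang B A) (lssrc p))
    (tm (tm (idm (Fo B X)) (cA B A)) (idm (lssrc p))
     ;; tm (sg (Fo B X) (bang B A)) (idm (tn (bang B A) (lssrc p)))
     ;; tm (idm (bang B A)) (tm (mm B X (Uo B A)) (idm (lssrc p)) ;; lsu p)).

Definition mu (X : CO) (A C : LO) : LSMor B :=
  mkLS (idm X) (tn (bang B A) C) (tm (tm (wX B X) (wA B A)) (idm C)).

Definition deriv (X : CO) (A : LO) : LSMor B :=
  LScmp (Sigma X A (Dcal X A)) (mu X A (bang B A)).

Definition derX (X : CO) (A : LO) : LSMor B :=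
  mkLS (idm X) (bang B A) (tm (wX B X) (ep B A)).
Definition wkX (X : CO) (A : LO) : LSMor B :=
  mkLS (idm X) (bang B A) (tm (wX B X) (wA B A)).
End GDefs.

(* Axiom (t.3), applied to the fibrewise dereliction (id_X, w_X ⊗ d_A) : (X, !A) -> (X, A)
   and post-composed with T(π_2), says that the derivative in the second variable of a linear
   map is the map itself: D_2(π_2 ; U u) has linear part u.  Since D_2(π_1) = 0, D_2 satisfies
   a chain rule along <π_1, h>, hence D_2(h) ; u = D_2(h ; U u).  Taking h = π_2 ; η and
   u = d_A, the triangle identity η ; U d = id turns 𝒟^X_A ; d_A into D_2(π_2), the identity.
   What Σ and μ add around 𝒟^X_A is a copy of !A that is only ever weakened, so by the counit
   law c ; (w ⊗ w) = w both sides of the linear rule equal (id_X, w_X ⊗ w_A ⊗ id_A). *)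

From Stdlib Require Import Setoid.
From Pilot Require Import Defs.

Lemma Hom_dom {c : Cat} {f : mor c} {a b} : Hom f a b -> dom f = a.
Proof. intros [H _]; exact H. Qed.
Lemma Hom_cod {c : Cat} {f : mor c} {a b} : Hom f a b -> cod f = b.
Proof. intros [_ H]; exact H. Qed.

Lemma Hom_eq {c : Cat} {f : mor c} {a b a' b'} : Hom f a b -> a = a' -> b = b' -> Hom f a' b'.
Proof. intros H <- <-; exact H. Qed.

Lemma idm_Hom {c : Cat} (a : ob c) : Hom (idm a) a a.
Proof. split; [apply dom_idm | apply cod_idm]. Qed.

Lemma cmp_Hom {c : Cat} (f g : mor c) a b b' d :
  Hom f a b -> Hom g b' d -> b = b' -> Hom (f ;; g) a d.
Proof.
intros [Hf Hf'] [Hg Hg'] <-; split.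
- rewrite dom_cmp; congruence.
- rewrite cod_cmp; congruence.
Qed.

Lemma pr_Hom {K : CartCat} (f g : mor (cc K)) a a' b d :
  Hom f a b -> Hom g a' d -> a = a' -> Hom (pr f g) a (prd b d).
Proof.
intros [Hf Hf'] [Hg Hg'] Ha.
destruct (pr_hom K f g) as [H1 H2]; [congruence |].
split; congruence.
Qed.

Lemma tm_Hom {L : AddSMCat} (f g : mor (sc L)) a b a' b' :
  Hom f a b -> Hom g a' b' -> Hom (tm f g) (tn a a') (tn b b').
Proof. intros [Hf Hf'] [Hg Hg']; split; [rewrite tm_dom | rewrite tm_cod]; congruence. Qed.

Lemma ad_Hom {L : AddSMCat} (f g : mor (sc L)) a b a' b' :
  Hom f a b -> Hom g a' b' -> a' = a -> b' = b -> Hom (ad f g) a b.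
Proof. intros Hf Hg <- <-; exact (ad_hom L Hf Hg). Qed.

Lemma Fm_Hom {B : LNL} (f : mor (cc (LC B))) a b : Hom f a b -> Hom (Fm B f) (Fo B a) (Fo B b).
Proof. intros [Hf Hf']; split; [rewrite Fm_dom | rewrite Fm_cod]; congruence. Qed.

Lemma Um_Hom {B : LNL} (f : mor (sc (LL B))) a b : Hom f a b -> Hom (Um B f) (Uo B a) (Uo B b).
Proof. intros [Hf Hf']; split; [rewrite Um_dom | rewrite Um_cod]; congruence. Qed.

Lemma bang_Fo {B : LNL} (A : ob (sc (LL B))) : bang B A = Fo B (Uo B A).
Proof. reflexivity. Qed.

Hint Rewrite tn_assoc tn_unl tn_unr t2 @bang_Fo : ob_normal.

(* The categories of [Defs] are untyped, so rewriting produces side conditions such as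
   [cod f = dom g].  [infer_Hom] computes the type of a morphism term bottom-up,
   [simpl_dom_cod] replaces each [dom t] and [cod t] by its computed value, and [solve_ob_eq]
   closes object equations modulo strictness of the tensor and (t.2). *)
Ltac infer_Hom :=
  lazymatch goal with
  | |- Hom (idm _) _ _ => apply idm_Hom
  | |- Hom (_ ;; _) _ _ => eapply cmp_Hom; [infer_Hom | infer_Hom | solve_ob_eq]
  | |- Hom (pr _ _) _ _ => eapply pr_Hom; [infer_Hom | infer_Hom | solve_ob_eq]
  | |- Hom (tm _ _) _ _ => eapply tm_Hom; infer_Hom
  | |- Hom (ad _ _) _ _ => eapply ad_Hom; [infer_Hom | infer_Hom | solve_ob_eq | solve_ob_eq]
  | |- Hom (Fm _ _) _ _ => eapply Fm_Hom; infer_Hom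
  | |- Hom (Um _ _) _ _ => eapply Um_Hom; infer_Hom
  | |- Hom (prm _ _) _ _ => unfold prm; infer_Hom
  | |- Hom (diag _) _ _ => unfold diag; infer_Hom
  | |- Hom (assc _ _ _) _ _ => unfold assc; infer_Hom
  | |- Hom (wX _ _) _ _ => unfold wX; infer_Hom
  | |- Hom (cX _ _) _ _ => unfold cX; infer_Hom
  | |- Hom (wA _ _) _ _ => unfold wA, wX; infer_Hom
  | |- Hom (cA _ _) _ _ => unfold cA, cX; infer_Hom
  | |- Hom (p1 _ _) _ _ => apply p1_hom
  | |- Hom (p2 _ _) _ _ => apply p2_hom
  | |- Hom (bng _) _ _ => apply bng_hom
  | |- Hom (sg _ _) _ _ => apply sg_hom
  | |- Hom (zr _ _) _ _ => apply zr_hom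
  | |- Hom (i1 _ _) _ _ => apply i1_hom
  | |- Hom (i2 _ _) _ _ => apply i2_hom
  | |- Hom (q1 _ _) _ _ => apply q1_hom
  | |- Hom (q2 _ _) _ _ => apply q2_hom
  | |- Hom (mm _ _ _) _ _ => apply mm_hom
  | |- Hom (mmi _ _ _) _ _ => apply mmi_hom
  | |- Hom (m1 _) _ _ => apply m1_hom
  | |- Hom (m1i _) _ _ => apply m1i_hom
  | |- Hom (et _ _) _ _ => apply et_hom
  | |- Hom (ep _ _) _ _ => apply ep_hom
  | |- Hom (nn _ _ _) _ _ => apply nn_hom
  | |- Hom (n0 _) _ _ => apply n0_hom
  | |- Hom (Tv _ _) _ _ => apply Tv_hom
  | |- Hom _ _ _ =>
      first [ eassumption
            | match goal with
              | H : LSHom ?p _ _ _ _ |- Hom (lsf ?p) _ _ => exact (proj1 H)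
              | H : LSHom ?p _ _ _ _ |- Hom (lsu ?p) _ _ => exact (proj2 (proj2 H))
              end
            | split; first [eassumption | reflexivity] ]
  end
with simpl_dom_cod :=
  repeat match goal with
         | H : dom ?t = _ |- context [dom ?t] => rewrite H
         | H : cod ?t = _ |- context [cod ?t] => rewrite H
         | H : LSHom ?p _ _ _ _ |- context [lssrc ?p] => rewrite (proj1 (proj2 H))
         | |- context [dom ?t] =>
             let H := fresh in eassert (H : Hom t _ _) by infer_Hom;
             lazymatch type of H with
             | Hom _ (dom t) _ => fail (* [t] is an atom of unknown type *)
             | _ => rewrite (Hom_dom H); clear H
             end
         | |- context [cod ?t] =>
             let H := fresh in eassert (H : Hom t _ _) by infer_Hom;
             lazymatch type of H with
             | Hom _ _ (cod t) => fail
             | _ => rewrite (Hom_cod H); clear H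
             end
         end
with solve_ob_eq := simpl_dom_cod; autorewrite with ob_normal; reflexivity.

Ltac solve_Hom := eapply Hom_eq; [infer_Hom | solve_ob_eq | solve_ob_eq].

Lemma cmp_idl_dom {c : Cat} (f : mor c) a : dom f = a -> idm a ;; f = f.
Proof. intros <-; apply cmp_idl. Qed.
Lemma cmp_idr_cod {c : Cat} (f : mor c) b : cod f = b -> f ;; idm b = f.
Proof. intros <-; apply cmp_idr. Qed.

Ltac assoc_r := repeat rewrite cmp_assoc by solve_ob_eq.
Ltac assoc_l := repeat rewrite <- cmp_assoc by solve_ob_eq.
Ltac simpl_idm :=
  repeat first [rewrite cmp_idl_dom by solve_ob_eq | rewrite cmp_idr_cod by solve_ob_eq].

(** * Cartesian and monoidal structure *)

Section Cartesian.
Context {K : CartCat}.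
Implicit Types (f g h : mor (cc K)) (X Y : ob (cc K)).

Lemma pr_p1_eq f g X Y : dom f = dom g -> cod f = X -> cod g = Y -> pr f g ;; p1 X Y = f.
Proof. intros H <- <-; apply pr_p1, H. Qed.
Lemma pr_p2_eq f g X Y : dom f = dom g -> cod f = X -> cod g = Y -> pr f g ;; p2 X Y = g.
Proof. intros H <- <-; apply pr_p2, H. Qed.

Lemma pr_ext f g X Y : cod f = prd X Y -> cod g = prd X Y ->
  f ;; p1 X Y = g ;; p1 X Y -> f ;; p2 X Y = g ;; p2 X Y -> f = g.
Proof.
intros Hf Hg E1 E2.
rewrite <- (pr_eta K f X Y Hf), <- (pr_eta K g X Y Hg), E1, E2; reflexivity.
Qed.

Lemma cmp_pr h f g : cod h = dom f -> dom f = dom g -> h ;; pr f g = pr (h ;; f) (h ;; g).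
Proof.
intros Hh Hfg; apply (pr_ext _ _ (cod f) (cod g)); try solve_ob_eq.
- rewrite pr_p1_eq by solve_ob_eq; assoc_r; rewrite pr_p1_eq by solve_ob_eq; reflexivity.
- rewrite pr_p2_eq by solve_ob_eq; assoc_r; rewrite pr_p2_eq by solve_ob_eq; reflexivity.
Qed.

Lemma bng_eq h X : cod h = trm -> dom h = X -> h = bng X.
Proof. intros H <-; apply bng_uniq, H. Qed.

Lemma pr_prm f g f' g' : dom f = dom g -> cod f = dom f' -> cod g = dom g' ->
  pr f g ;; prm f' g' = pr (f ;; f') (g ;; g').
Proof.
intros; unfold prm; rewrite cmp_pr by solve_ob_eq; assoc_l.
rewrite pr_p1_eq, pr_p2_eq by solve_ob_eq; reflexivity.
Qed.

Lemma prm_p1 f g X Y : cod f = X -> cod g = Y -> prm f g ;; p1 X Y = p1 (dom f) (dom g) ;; f.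
Proof. intros; apply pr_p1_eq; solve_ob_eq. Qed.
Lemma prm_p2 f g X Y : cod f = X -> cod g = Y -> prm f g ;; p2 X Y = p2 (dom f) (dom g) ;; g.
Proof. intros; apply pr_p2_eq; solve_ob_eq. Qed.

Lemma prm_prm f g f' g' : cod f = dom f' -> cod g = dom g' ->
  prm f g ;; prm f' g' = prm (f ;; f') (g ;; g').
Proof.
intros; unfold prm at 1; rewrite pr_prm by solve_ob_eq.
unfold prm; assoc_r; simpl_dom_cod; reflexivity.
Qed.

Lemma diag_prm f g X : dom f = X -> dom g = X -> diag X ;; prm f g = pr f g.
Proof. intros; unfold diag; rewrite pr_prm by solve_ob_eq; simpl_idm; reflexivity. Qed.

Lemma pr_p1_p2 X Y : pr (p1 X Y) (p2 X Y) = idm (prd X Y).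
Proof.
apply (pr_ext _ _ X Y); try solve_ob_eq.
- rewrite pr_p1_eq by solve_ob_eq; simpl_idm; reflexivity.
- rewrite pr_p2_eq by solve_ob_eq; simpl_idm; reflexivity.
Qed.

Lemma diag_coassoc X :
  diag X ;; prm (diag X) (idm X) ;; assc X X X = diag X ;; prm (idm X) (diag X).
Proof.
rewrite !diag_prm by solve_ob_eq; unfold assc.
rewrite cmp_pr by solve_ob_eq; assoc_l.
rewrite pr_p1_eq by solve_ob_eq.
rewrite cmp_pr by solve_ob_eq; assoc_l.
rewrite !pr_p1_eq, !pr_p2_eq by solve_ob_eq.
unfold diag; rewrite pr_p1_eq, pr_p2_eq by solve_ob_eq; reflexivity.
Qed.

End Cartesian.

Section Monoidal.
Context {L : AddSMCat}.
Implicit Types (f g h : mor (sc L)) (a b : ob (sc L)).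

Lemma tm_cmpl f g h : cod f = dom g -> tm (f ;; g) h = tm f (idm (dom h)) ;; tm g h.
Proof. intro; rewrite <- tm_cmp by solve_ob_eq; simpl_idm; reflexivity. Qed.
Lemma tm_cmpr f g h : cod f = dom g -> tm h (f ;; g) = tm (idm (dom h)) f ;; tm h g.
Proof. intro; rewrite <- tm_cmp by solve_ob_eq; simpl_idm; reflexivity. Qed.
Lemma tm_cmpl_idm f g a : cod f = dom g -> tm (f ;; g) (idm a) = tm f (idm a) ;; tm g (idm a).
Proof. intro; rewrite <- tm_cmp by solve_ob_eq; simpl_idm; reflexivity. Qed.
Lemma tm_cmpr_idm f g a : cod f = dom g -> tm (idm a) (f ;; g) = tm (idm a) f ;; tm (idm a) g.
Proof. intro; rewrite <- tm_cmp by solve_ob_eq; simpl_idm; reflexivity. Qed.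

Lemma tm_split_l f g : tm f g = tm f (idm (dom g)) ;; tm (idm (cod f)) g.
Proof. rewrite <- tm_cmp by solve_ob_eq; simpl_idm; reflexivity. Qed.

Lemma tm_unit_cmp f g h : cod f = un -> cod g = dom h -> tm f g ;; h = tm f (g ;; h).
Proof.
intros Hf Hg; rewrite <- (tm_unl L h) at 1; rewrite <- Hf, <- tm_cmp by solve_ob_eq.
simpl_idm; reflexivity.
Qed.

Lemma sg_unit a : sg a un = idm a.
Proof.
assert (Hdup : sg a un = sg a un ;; sg a un).
{ pose proof (sg_hex L a un un) as H; rewrite tm_unl, tm_unr, tn_unl in H; exact H. }
assert (Hinv : sg a un ;; sg un a = idm a) by (rewrite sg_inv, tn_unr; reflexivity).
transitivity (sg a un ;; (sg a un ;; sg un a)).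
- rewrite Hinv; simpl_idm; reflexivity.
- assoc_l; rewrite <- Hdup; exact Hinv.
Qed.

Lemma sg_tm_unit f g a b : dom f = a -> dom g = b -> cod f = un -> cod g = un ->
  sg a b ;; tm g f = tm f g.
Proof.
intros <- <- Hf Hg; rewrite <- (sg_nat L f g), Hf, Hg, sg_unit; simpl_idm; reflexivity.
Qed.

Lemma cmp_adl_eq f g h : dom f = dom g -> cod f = cod g -> dom h = cod f ->
  ad f g ;; h = ad (f ;; h) (g ;; h).
Proof. intros; apply (@cmp_adl L f g h (dom f) (cod f)); solve_Hom. Qed.
Lemma cmp_adr_eq f g h : dom f = dom g -> cod f = cod g -> cod h = dom f ->
  h ;; ad f g = ad (h ;; f) (h ;; g).
Proof. intros; apply (@cmp_adr L f g h (dom f) (cod f)); solve_Hom. Qed.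

Lemma ad_zr_r f a b : dom f = a -> cod f = b -> ad f (zr a b) = f.
Proof. intros; apply (@ad_zr L f a b); solve_Hom. Qed.

Lemma ad_zr_l f a b : dom f = a -> cod f = b -> ad (zr a b) f = f.
Proof.
intros; rewrite (@ad_comm L (zr a b) f a b) by solve_Hom; apply ad_zr_r; assumption.
Qed.

Lemma biprod_pair_q1 f g a1 a2 : dom f = dom g -> cod f = a1 -> cod g = a2 ->
  ad (f ;; i1 a1 a2) (g ;; i2 a1 a2) ;; q1 a1 a2 = f.
Proof.
intros; rewrite cmp_adl_eq by solve_ob_eq; assoc_r.
rewrite i1_q1, i2_q1, cmp_zrr by solve_ob_eq; simpl_idm.
apply ad_zr_r; solve_ob_eq.
Qed.
Lemma biprod_pair_q2 f g a1 a2 : dom f = dom g -> cod f = a1 -> cod g = a2 ->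
  ad (f ;; i1 a1 a2) (g ;; i2 a1 a2) ;; q2 a1 a2 = g.
Proof.
intros; rewrite cmp_adl_eq by solve_ob_eq; assoc_r.
rewrite i1_q2, i2_q2, cmp_zrr by solve_ob_eq; simpl_idm.
apply ad_zr_l; solve_ob_eq.
Qed.

End Monoidal.

(** * The LNL adjunction and the comonoid (c, w) *)

Section Adjunction.
Context {B : LNL}.
Local Notation C := (cc (LC B)).
Implicit Types (f g : mor C) (X Y Z : ob C).

Lemma wX_natural f X Y : dom f = X -> cod f = Y -> Fm B f ;; wX B Y = wX B X.
Proof.
intros <- <-; unfold wX; assoc_l; rewrite <- Fm_cmp by solve_ob_eq.
rewrite (bng_eq (f ;; bng (cod f)) (dom f)) by solve_ob_eq; reflexivity.
Qed.

Lemma mm_natural f g X Y X' Y' : dom f = X -> dom g = Y -> cod f = X' -> cod g = Y' ->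
  tm (Fm B f) (Fm B g) ;; mm B X' Y' = mm B X Y ;; Fm B (prm f g).
Proof. intros <- <- <- <-; apply mm_nat. Qed.

Lemma mmi_natural f g X Y X' Y' : dom f = X -> dom g = Y -> cod f = X' -> cod g = Y' ->
  mmi B X Y ;; tm (Fm B f) (Fm B g) = Fm B (prm f g) ;; mmi B X' Y'.
Proof.
intros; transitivity (mmi B X Y ;; (tm (Fm B f) (Fm B g) ;; mm B X' Y') ;; mmi B X' Y').
- assoc_r; rewrite mm_mmi; simpl_idm; reflexivity.
- rewrite (mm_natural f g X Y X' Y') by assumption; assoc_l.
  rewrite mmi_mm; simpl_idm; reflexivity.
Qed.

Lemma tm_m1i_l X : tm (m1i B) (idm (Fo B X)) = mm B trm X ;; Fm B (p2 trm X).
Proof.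
transitivity
  (tm (m1i B) (idm (Fo B X)) ;; (tm (m1 B) (idm (Fo B X)) ;; mm B trm X ;; Fm B (p2 trm X))).
- rewrite mm_unl; simpl_idm; reflexivity.
- assoc_l; rewrite <- tm_cmpl_idm, m1i_m1, tm_id by solve_ob_eq; simpl_idm; reflexivity.
Qed.
Lemma tm_m1i_r X : tm (idm (Fo B X)) (m1i B) = mm B X trm ;; Fm B (p1 X trm).
Proof.
transitivity
  (tm (idm (Fo B X)) (m1i B) ;; (tm (idm (Fo B X)) (m1 B) ;; mm B X trm ;; Fm B (p1 X trm))).
- rewrite mm_unr; simpl_idm; reflexivity.
- assoc_l; rewrite <- tm_cmpr_idm, m1i_m1, tm_id by solve_ob_eq; simpl_idm; reflexivity.
Qed.

Lemma cX_counit_l X : cX B X ;; tm (wX B X) (idm (Fo B X)) = idm (Fo B X).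
Proof.
unfold cX, wX; rewrite tm_cmpl_idm, tm_m1i_l by solve_ob_eq.
rewrite <- !(Fm_id B X); assoc_r.
rewrite <- (cmp_assoc _ (mmi B X X)), (mmi_natural (bng X) (idm X) X X trm X) by solve_ob_eq.
assoc_r; rewrite <- (cmp_assoc _ (mmi B trm X)), mmi_mm by solve_ob_eq; simpl_idm.
rewrite <- !Fm_cmp by solve_ob_eq; f_equal.
rewrite prm_p2 by solve_ob_eq; simpl_idm.
unfold diag; rewrite pr_p2_eq by solve_ob_eq; reflexivity.
Qed.

Lemma cX_counit_r X : cX B X ;; tm (idm (Fo B X)) (wX B X) = idm (Fo B X).
Proof.
unfold cX, wX; rewrite tm_cmpr_idm, tm_m1i_r by solve_ob_eq.
rewrite <- !(Fm_id B X); assoc_r.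
rewrite <- (cmp_assoc _ (mmi B X X)), (mmi_natural (idm X) (bng X) X X X trm) by solve_ob_eq.
assoc_r; rewrite <- (cmp_assoc _ (mmi B X trm)), mmi_mm by solve_ob_eq; simpl_idm.
rewrite <- !Fm_cmp by solve_ob_eq; f_equal.
rewrite prm_p1 by solve_ob_eq; simpl_idm.
unfold diag; rewrite pr_p1_eq by solve_ob_eq; reflexivity.
Qed.

Lemma cX_natural f X Y : dom f = X -> cod f = Y ->
  Fm B f ;; cX B Y = cX B X ;; tm (Fm B f) (Fm B f).
Proof.
intros <- <-; unfold cX; assoc_r.
rewrite (mmi_natural f f (dom f) (dom f) (cod f) (cod f)) by reflexivity.
assoc_l; rewrite <- !Fm_cmp by solve_ob_eq; do 2 f_equal.
rewrite diag_prm by reflexivity; unfold diag; rewrite cmp_pr by solve_ob_eq; simpl_idm; reflexivity.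
Qed.


Lemma mmi_assoc X Y Z :
  mmi B (prd X Y) Z ;; tm (mmi B X Y) (idm (Fo B Z))
  = Fm B (assc X Y Z) ;; mmi B X (prd Y Z) ;; tm (idm (Fo B X)) (mmi B Y Z).
Proof.
transitivity (mmi B (prd X Y) Z ;; tm (mmi B X Y) (idm (Fo B Z)) ;;
  ((tm (idm (Fo B X)) (mm B Y Z) ;; mm B X (prd Y Z)) ;;
   (mmi B X (prd Y Z) ;; tm (idm (Fo B X)) (mmi B Y Z)))).
- assoc_r; rewrite <- (cmp_assoc _ (mm B X (prd Y Z))), mm_mmi by solve_ob_eq; simpl_idm.
  rewrite <- tm_cmpr_idm, mm_mmi, tm_id by solve_ob_eq; simpl_idm; reflexivity.
- rewrite <- mm_assoc; assoc_r.
  rewrite <- (cmp_assoc _ (tm (mmi B X Y) _)), <- tm_cmpl_idm, mmi_mm, tm_id by solve_ob_eq.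
  simpl_idm; rewrite <- (cmp_assoc _ (mmi B (prd X Y) Z)), mmi_mm by solve_ob_eq.
  simpl_idm; reflexivity.
Qed.

Lemma cX_coassoc X :
  cX B X ;; tm (cX B X) (idm (Fo B X)) = cX B X ;; tm (idm (Fo B X)) (cX B X).
Proof.
unfold cX; rewrite tm_cmpl_idm, tm_cmpr_idm by solve_ob_eq.
rewrite <- !(Fm_id B X); assoc_r.
rewrite <- (cmp_assoc _ (mmi B X X) (tm (Fm B (diag X)) _)),
        <- (cmp_assoc _ (mmi B X X) (tm (Fm B (idm X)) _)) by solve_ob_eq.
rewrite (mmi_natural (diag X) (idm X) X X (prd X X) X),
        (mmi_natural (idm X) (diag X) X X X (prd X X)) by solve_ob_eq.
rewrite !Fm_id, (cmp_assoc _ (Fm B (prm _ _)) (mmi B (prd X X) X)), mmi_assoc by solve_ob_eq.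
assoc_l; rewrite <- !Fm_cmp by solve_ob_eq; rewrite diag_coassoc; reflexivity.
Qed.

Lemma mmi_wX X Y : mmi B X Y ;; tm (wX B X) (wX B Y) = wX B (prd X Y).
Proof.
unfold wX; rewrite tm_cmp by solve_ob_eq; assoc_l.
rewrite (mmi_natural (bng X) (bng Y) X Y trm trm) by solve_ob_eq.
rewrite (tm_split_l (m1i B)); simpl_dom_cod; rewrite tm_m1i_l, tm_unl.
assoc_r; rewrite <- (cmp_assoc _ (mmi B trm trm)), mmi_mm by solve_ob_eq; simpl_idm.
assoc_l; rewrite <- Fm_cmp by solve_ob_eq.
rewrite (bng_eq (prm (bng X) (bng Y) ;; p2 trm trm) (prd X Y)) by solve_ob_eq; reflexivity.
Qed.

Lemma mm_wX X Y : mm B X Y ;; wX B (prd X Y) = tm (wX B X) (wX B Y).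
Proof. rewrite <- mmi_wX; assoc_l; rewrite mm_mmi; simpl_idm; reflexivity. Qed.

Lemma cX_wX_wX X : cX B X ;; tm (wX B X) (wX B X) = wX B X.
Proof.
rewrite (tm_split_l (wX B X)); simpl_dom_cod; unfold wX at 3; rewrite tm_unl; fold (wX B X).
assoc_l; rewrite cX_counit_l; simpl_idm; reflexivity.
Qed.

Lemma nn_natural (f g : mor (sc (LL B))) a b a' b' :
  dom f = a -> dom g = b -> cod f = a' -> cod g = b' ->
  nn B a b ;; Um B (tm f g) = prm (Um B f) (Um B g) ;; nn B a' b'.
Proof. intros <- <- <- <-; symmetry; apply nn_nat. Qed.

Lemma et_natural f X Y : dom f = X -> cod f = Y -> et B X ;; Um B (Fm B f) = f ;; et B Y.
Proof. intros <- <-; symmetry; apply et_nat. Qed.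

Lemma et_wX X : et B X ;; Um B (wX B X) = bng X ;; n0 B.
Proof.
unfold wX; rewrite Um_cmp by solve_ob_eq; assoc_l.
rewrite (et_natural (bng X) X trm), <- et_mon1 by solve_ob_eq; assoc_r.
rewrite <- Um_cmp, m1_m1i, Um_id by solve_ob_eq; simpl_idm; reflexivity.
Qed.

End Adjunction.

(** * The category LS(C) *)

Ltac solve_LSHom := split; [|split]; cbn [lsf lssrc lsu]; [solve_Hom | solve_ob_eq | solve_Hom].

Section LS.
Context {B : LNL}.
Implicit Types (p q r : LSMor B).

Lemma LS_ext p q : lsf p = lsf q -> lssrc p = lssrc q -> lsu p = lsu q -> p = q.
Proof. destruct p, q; cbn; intros -> -> ->; reflexivity. Qed.

Lemma LScmp_LSHom {p q X A Y A' Z A''} :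
  LSHom p X A Y A' -> LSHom q Y A' Z A'' -> LSHom (LScmp p q) X A Z A''.
Proof.
destruct p as [f s u], q as [g t v]; intros (Hf & Hs & Hu) (Hg & Ht & Hv); cbn in *; subst.
unfold LScmp; solve_LSHom.
Qed.

Lemma LScmp_assoc {p q r X A Y A' Z A'' W A'''} :
  LSHom p X A Y A' -> LSHom q Y A' Z A'' -> LSHom r Z A'' W A''' ->
  LScmp (LScmp p q) r = LScmp p (LScmp q r).
Proof.
destruct p as [f s u], q as [g t v], r as [h s' w].
unfold LSHom; cbn; intros (Hf & -> & Hu) (Hg & -> & Hv) (Hh & -> & Hw).
apply LS_ext; cbn; [assoc_r; reflexivity | reflexivity |].
simpl_dom_cod.
assert (Hnat : tm (Fm B f) u ;; tm (cX B Y) (idm A')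
               = tm (cX B X) (idm (tn (Fo B X) A)) ;; tm (Fm B f) (tm (Fm B f) u)).
{ rewrite <- tm_cmp by solve_ob_eq; simpl_idm.
  rewrite (cX_natural f X Y), tm_cmpl, tm_assoc by solve_ob_eq; simpl_dom_cod; reflexivity. }
assert (Hcoassoc : tm (cX B X) (idm A) ;; tm (cX B X) (idm (tn (Fo B X) A))
                   = tm (cX B X) (idm A) ;; tm (idm (Fo B X)) (tm (cX B X) (idm A))).
{ rewrite <- (tm_id _ (Fo B X) A), <- !tm_assoc, <- !tm_cmpl_idm, cX_coassoc by solve_ob_eq.
  reflexivity. }
assoc_r; rewrite <- (cmp_assoc _ (tm (Fm B f) u) (tm (cX B Y) (idm A'))), Hnat by solve_ob_eq.
rewrite Fm_cmp, tm_cmpr by solve_ob_eq; simpl_dom_cod.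
assoc_l; rewrite Hcoassoc; assoc_r; do 2 f_equal.
assoc_l; rewrite <- tm_cmp by solve_ob_eq; reflexivity.
Qed.

Lemma LScmp_wX_lsu {p X A Y A' g s u} :
  LSHom p X A Y A' -> dom u = A' -> lsu (LScmp p (mkLS g s (tm (wX B Y) u))) = lsu p ;; u.
Proof.
destruct p as [f s0 v]; unfold LSHom; cbn; intros (Hf & -> & Hv) Hu; simpl_dom_cod.
assoc_r; rewrite <- tm_cmp, (wX_natural f X Y) by solve_ob_eq.
rewrite (tm_split_l (wX B X)); simpl_dom_cod; rewrite tm_unl.
rewrite <- (tm_id _ (Fo B X) A), <- tm_assoc; assoc_l.
rewrite <- tm_cmpl_idm, cX_counit_l, tm_id by solve_ob_eq; simpl_idm; reflexivity.
Qed.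

Lemma LScmp_fibre_wX {p X A Y A' u} :
  LSHom p X A Y A' -> dom u = A' ->
  LScmp p (mkLS (idm Y) A' (tm (wX B Y) u)) = mkLS (lsf p) (lssrc p) (lsu p ;; u).
Proof.
intros Hp Hu; apply LS_ext; [| reflexivity | exact (LScmp_wX_lsu Hp Hu)].
destruct Hp as [Hf _]; cbn; simpl_idm; reflexivity.
Qed.

Lemma LScmp_idr {p X A Y A'} : LSHom p X A Y A' -> LScmp p (LSid B Y A') = p.
Proof.
intro Hp; unfold LSid; rewrite (LScmp_fibre_wX Hp (dom_idm _ _)).
destruct p as [f s u], Hp as (Hf & Hs & Hu); cbn in *; simpl_idm; reflexivity.
Qed.

Lemma LScmp_idl {p X A Y A'} : LSHom p X A Y A' -> LScmp (LSid B X A) p = p.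
Proof.
destruct p as [f s u]; unfold LSHom, LSid; cbn; intros (Hf & -> & Hu).
apply LS_ext; cbn; [simpl_idm; reflexivity | reflexivity |].
rewrite Fm_id, <- tm_assoc; simpl_dom_cod.
rewrite <- tm_cmpl_idm, cX_counit_r, tm_id by solve_ob_eq; simpl_idm; reflexivity.
Qed.

Lemma LScmp_LSpair {p q r X A Y A' Z1 A1 Z2 A2} :
  LSHom p X A Y A' -> LSHom q Y A' Z1 A1 -> LSHom r Y A' Z2 A2 ->
  LScmp p (LSpair q r) = LSpair (LScmp p q) (LScmp p r).
Proof.
destruct p as [f s u], q as [g s1 v], r as [h s2 w]; unfold LSHom; cbn.
intros (Hf & -> & Hu) (Hg & -> & Hv) (Hh & -> & Hw).
apply LS_ext; cbn; [rewrite cmp_pr by solve_ob_eq; reflexivity | reflexivity |].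
rewrite cmp_adr_eq by solve_ob_eq; simpl_dom_cod; assoc_r; reflexivity.
Qed.

Lemma LSpair_LSHom {q r Y A Z1 A1 Z2 A2} :
  LSHom q Y A Z1 A1 -> LSHom r Y A Z2 A2 -> LSHom (LSpair q r) Y A (prd Z1 Z2) (bp A1 A2).
Proof.
destruct q as [g s1 v], r as [h s2 w]; intros (Hg & Hs1 & Hv) (Hh & Hs2 & Hw); cbn in *; subst.
unfold LSpair; solve_LSHom.
Qed.

Lemma LSpair_proj1 {q r Y A Z1 A1 Z2 A2} :
  LSHom q Y A Z1 A1 -> LSHom r Y A Z2 A2 ->
  LScmp (LSpair q r) (mkLS (p1 Z1 Z2) (bp A1 A2) (tm (wX B (prd Z1 Z2)) (q1 A1 A2))) = q.
Proof.
intros Hq Hr; apply LS_ext; cbn [LScmp lsf lssrc].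
- destruct Hq as [[? ?] _], Hr as [[? ?] _]; apply pr_p1_eq; solve_ob_eq.
- reflexivity.
- rewrite (LScmp_wX_lsu (LSpair_LSHom Hq Hr)) by solve_ob_eq.
  destruct Hq as (_ & _ & ? & ?), Hr as (_ & _ & ? & ?); cbn [LSpair lsu]; simpl_dom_cod.
  apply biprod_pair_q1; solve_ob_eq.
Qed.

Lemma LSpair_proj2 {q r Y A Z1 A1 Z2 A2} :
  LSHom q Y A Z1 A1 -> LSHom r Y A Z2 A2 ->
  LScmp (LSpair q r) (mkLS (p2 Z1 Z2) (bp A1 A2) (tm (wX B (prd Z1 Z2)) (q2 A1 A2))) = r.
Proof.
intros Hq Hr; apply LS_ext; cbn [LScmp lsf lssrc].
- destruct Hq as [[? ?] _], Hr as [[? ?] _]; apply pr_p2_eq; solve_ob_eq.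
- destruct Hq as (_ & ? & _), Hr as (_ & ? & _); cbn; congruence.
- rewrite (LScmp_wX_lsu (LSpair_LSHom Hq Hr)) by solve_ob_eq.
  destruct Hq as (_ & _ & ? & ?), Hr as (_ & _ & ? & ?); cbn [LSpair lsu]; simpl_dom_cod.
  apply biprod_pair_q2; solve_ob_eq.
Qed.

End LS.

(** * Derivatives in the second variable *)

Section Brace.
Context {B : LNL}.
Local Notation L := (sc (LL B)).
Implicit Types (X : ob (cc (LC B))).

Lemma brace_fibre_p2 X {A' B'} {u : mor L} : Hom u A' B' ->
  brace (mkLS (idm X) A' (tm (wX B X) u)) ;; p2 X (Uo B B') = p2 X (Uo B A') ;; Um B u.
Proof.
intros Hu; unfold brace; cbn [lsf lssrc lsu]; simpl_dom_cod.
rewrite pr_p2_eq by solve_ob_eq; assoc_r.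
rewrite (nn_natural (wX B X) u (Fo B X) A' un B') by solve_ob_eq; assoc_l.
rewrite prm_prm, et_wX by solve_ob_eq; simpl_idm.
rewrite <- (cmp_idr_cod (Um B u) (Uo B B')) at 1 by solve_ob_eq.
rewrite <- prm_prm by solve_ob_eq; assoc_r; rewrite nn_unl.
rewrite prm_p2 by solve_ob_eq; simpl_dom_cod; reflexivity.
Qed.

Lemma brace_fibre_Hom X {A' B'} {u : mor L} : Hom u A' B' ->
  Hom (brace (mkLS (idm X) A' (tm (wX B X) u))) (prd X (Uo B A')) (prd X (Uo B B')).
Proof. intros Hu; unfold brace; cbn [lsf lssrc lsu]; solve_Hom. Qed.

Lemma Wm_fibre X {A' B'} {u : mor L} : Hom u A' B' ->
  Wm (mkLS (idm X) A' (tm (wX B X) u))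
  = mkLS (brace (mkLS (idm X) A' (tm (wX B X) u))) A' (tm (wX B (prd X (Uo B A'))) u).
Proof.
intros Hu; unfold Wm; cbn [lsf lssrc lsu]; f_equal; simpl_dom_cod.
rewrite <- tm_cmp, (wX_natural (p1 X (Uo B A')) (prd X (Uo B A')) X) by solve_ob_eq.
simpl_idm; reflexivity.
Qed.

End Brace.

Section Differential.
Context {G : GDSC}.
Local Notation B := (base G).
Local Notation C := (cc (LC B)).
Local Notation L := (sc (LL B)).
Local Notation lam := (lam G).
Local Notation T := (Tmor lam (Tv G)).
Local Notation i2XY := (i2XY lam (phinv G)).
Implicit Types (f h : mor C) (X Y Z : ob C).

Lemma T_LSHom f X Y : dom f = X -> cod f = Y -> LSHom (T f) X (lam X) Y (lam Y).
Proof. intros <- <-; unfold Tmor; solve_LSHom. Qed.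

Lemma phi_LSHom X Y :
  LSHom (phi lam (Tv G) X Y) (prd X Y) (lam (prd X Y)) (prd X Y) (bp (lam X) (lam Y)).
Proof. apply LSpair_LSHom; apply T_LSHom; solve_ob_eq. Qed.

Lemma fib_i2_LSHom Z A1 A2 : LSHom (fib_i2 B Z A1 A2) Z A2 Z (bp A1 A2).
Proof. unfold fib_i2; solve_LSHom. Qed.

Lemma i2XY_LSHom X Y : LSHom (i2XY X Y) (prd X Y) (lam Y) (prd X Y) (lam (prd X Y)).
Proof. exact (LScmp_LSHom (fib_i2_LSHom _ _ _) (phinv_hom G X Y)). Qed.

Lemma phinv_phi_cancel {P Z A} X Y :
  LSHom P (prd X Y) (bp (lam X) (lam Y)) Z A ->
  LScmp (phinv G X Y) (LScmp (phi lam (Tv G) X Y) P) = P.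
Proof.
intro HP; rewrite <- (LScmp_assoc (phinv_hom G X Y) (phi_LSHom X Y) HP), phinv_phi.
exact (LScmp_idl HP).
Qed.

Lemma phinv_T_p1 X Y :
  LScmp (phinv G X Y) (T (p1 X Y))
  = mkLS (p1 X Y) (bp (lam X) (lam Y)) (tm (wX B (prd X Y)) (q1 (lam X) (lam Y))).
Proof.
rewrite <- (phinv_phi_cancel (P := mkLS (p1 X Y) _ _) (Z := X) (A := lam X) X Y)
  by solve_LSHom; unfold phi.
rewrite LSpair_proj1 by (apply T_LSHom; solve_ob_eq); reflexivity.
Qed.

Lemma phinv_T_p2 X Y :
  LScmp (phinv G X Y) (T (p2 X Y))
  = mkLS (p2 X Y) (bp (lam X) (lam Y)) (tm (wX B (prd X Y)) (q2 (lam X) (lam Y))).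
Proof.
rewrite <- (phinv_phi_cancel (P := mkLS (p2 X Y) _ _) (Z := Y) (A := lam Y) X Y)
  by solve_LSHom; unfold phi.
rewrite LSpair_proj2 by (apply T_LSHom; solve_ob_eq); reflexivity.
Qed.

(* [LScmp (i2XY X Y) (T h)] has the same linear part as [D2 G X Y h]; only its base component
   differs ([h] instead of the identity). *)
Lemma i2XY_T_p1 X Y :
  LScmp (i2XY X Y) (T (p1 X Y))
  = mkLS (p1 X Y) (lam Y) (tm (wX B (prd X Y)) (zr (lam Y) (lam X))).
Proof.
unfold Defs.i2XY.
rewrite (LScmp_assoc (fib_i2_LSHom _ _ _) (phinv_hom G X Y)), phinv_T_p1
  by (apply T_LSHom; solve_ob_eq).
apply LS_ext; [cbn; simpl_idm; reflexivity | reflexivity |].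
rewrite (LScmp_wX_lsu (fib_i2_LSHom _ _ _)) by solve_ob_eq; cbn.
rewrite tm_unit_cmp, i2_q1 by solve_ob_eq; reflexivity.
Qed.

Lemma i2XY_T_p2 X Y :
  LScmp (i2XY X Y) (T (p2 X Y)) = mkLS (p2 X Y) (lam Y) (tm (wX B (prd X Y)) (idm (lam Y))).
Proof.
unfold Defs.i2XY.
rewrite (LScmp_assoc (fib_i2_LSHom _ _ _) (phinv_hom G X Y)), phinv_T_p2
  by (apply T_LSHom; solve_ob_eq).
apply LS_ext; [cbn; simpl_idm; reflexivity | reflexivity |].
rewrite (LScmp_wX_lsu (fib_i2_LSHom _ _ _)) by solve_ob_eq; cbn.
rewrite tm_unit_cmp, i2_q2 by solve_ob_eq; reflexivity.
Qed.

Lemma phinv_lsf X Y : lsf (phinv G X Y) = idm (prd X Y).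
Proof.
pose proof (phinv_hom G X Y).
change (idm (prd X Y)) with (lsf (LSid B (prd X Y) (lam (prd X Y)))).
rewrite <- phi_phinv; cbn; rewrite pr_p1_p2; simpl_idm; reflexivity.
Qed.

Lemma D2_LSHom X Y Z h : dom h = prd X Y -> cod h = Z ->
  LSHom (D2 G X Y h) (prd X Y) (lam Y) (prd X Y) (lam Z).
Proof. intros Hh Hh'; apply (LScmp_LSHom (i2XY_LSHom X Y)); unfold Dd; solve_LSHom. Qed.

(* Chain rule along <π_1, h>: the first component contributes nothing since D_2(π_1) = 0. *)
Lemma i2XY_T_pr_p1 X Y Z h : dom h = prd X Y -> cod h = Z ->
  LScmp (i2XY X Y) (T (pr (p1 X Y) h))
  = LScmp (mkLS (pr (p1 X Y) h) (lam Y) (lsu (D2 G X Y h))) (i2XY X Z).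
Proof.
intros Hh <-; set (Z := cod h); set (k := pr (p1 X Y) h).
pose proof (i2XY_LSHom X Y) as Hi.
assert (Hk : LSHom (T k) (prd X Y) (lam (prd X Y)) (prd X Z) (lam (prd X Z)))
  by (apply T_LSHom; unfold k, Z; solve_ob_eq).
pose proof (LScmp_LSHom Hi Hk) as Hik.
rewrite <- (LScmp_idr Hik), <- (phi_phinv G X Z).
rewrite <- (LScmp_assoc Hik (phi_LSHom X Z) (phinv_hom G X Z)); unfold phi.
assert (Hp1 : LSHom (T (p1 X Z)) (prd X Z) (lam (prd X Z)) X (lam X))
  by (apply T_LSHom; solve_ob_eq).
assert (Hp2 : LSHom (T (p2 X Z)) (prd X Z) (lam (prd X Z)) Z (lam Z))
  by (apply T_LSHom; solve_ob_eq).
rewrite (LScmp_LSpair Hik Hp1 Hp2), (LScmp_assoc Hi Hk Hp1), (LScmp_assoc Hi Hk Hp2).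
rewrite <- !T_cmp by (unfold k, Z; solve_ob_eq); unfold k, Z.
rewrite pr_p1_eq, pr_p2_eq, i2XY_T_p1 by solve_ob_eq.
pose proof (D2_LSHom X Y (cod h) h Hh eq_refl) as HD.
assert (Hv : LSHom (mkLS (pr (p1 X Y) h) (lam Y) (lsu (D2 G X Y h)))
                   (prd X Y) (lam Y) (prd X (cod h)) (lam (cod h)))
  by solve_LSHom.
unfold Defs.i2XY at 2; rewrite <- (LScmp_assoc Hv (fib_i2_LSHom _ _ _) (phinv_hom G X _)).
f_equal; unfold fib_i2; rewrite (LScmp_fibre_wX Hv) by solve_ob_eq.
apply LS_ext; cbn [LSpair lsf lssrc lsu].
- cbn [LScmp lsf Defs.i2XY fib_i2 Tmor]; rewrite phinv_lsf; simpl_idm; reflexivity.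
- reflexivity.
- change (lsu (LScmp (i2XY X Y) (T h))) with (lsu (D2 G X Y h)); simpl_dom_cod.
  rewrite tm_zrr, cmp_zrl by solve_ob_eq; simpl_dom_cod; rewrite tn_unl.
  apply ad_zr_l; solve_ob_eq.
Qed.

Lemma t3_fibre X {A' B'} {u : mor L} : Hom u A' B' ->
  let p := mkLS (idm X) A' (tm (wX B X) u) in
  LScmp (Wm p) (i2XY X (Uo B B')) = LScmp (i2XY X (Uo B A')) (T (brace p)).
Proof.
intros Hu p; pose proof (t3 G p) as E; cbn [p lsf lssrc lsu] in E.
rewrite dom_idm, cod_idm in E; replace (cod (tm (wX B X) u)) with B' in E by solve_ob_eq.
apply E; solve_ob_eq.
Qed.

Lemma i2XY_T_linear X {A' B'} {u : mor L} : Hom u A' B' ->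
  LScmp (i2XY X (Uo B A')) (T (p2 X (Uo B A') ;; Um B u))
  = mkLS (p2 X (Uo B A') ;; Um B u) A' (tm (wX B (prd X (Uo B A'))) u).
Proof.
intros Hu; pose proof (brace_fibre_Hom X Hu) as Hb.
assert (HW : LSHom (Wm (mkLS (idm X) A' (tm (wX B X) u)))
                   (prd X (Uo B A')) A' (prd X (Uo B B')) (lam (Uo B B')))
  by (rewrite (Wm_fibre X Hu); solve_LSHom).
assert (Hp2 : LSHom (T (p2 X (Uo B B'))) (prd X (Uo B B')) (lam (prd X (Uo B B')))
                    (Uo B B') (lam (Uo B B')))
  by (apply T_LSHom; solve_ob_eq).
rewrite <- (brace_fibre_p2 X Hu), T_cmp by solve_ob_eq.
rewrite <- (LScmp_assoc (i2XY_LSHom X _) (T_LSHom _ _ _ (Hom_dom Hb) (Hom_cod Hb)) Hp2).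
rewrite <- (t3_fibre X Hu), (LScmp_assoc HW (i2XY_LSHom X _) Hp2), i2XY_T_p2.
apply LS_ext; [reflexivity | reflexivity |].
rewrite (LScmp_wX_lsu HW), (Wm_fibre X Hu) by solve_ob_eq; cbn [lsu]; simpl_idm; reflexivity.
Qed.

Lemma D2_cmp_linear X Y h {A' B'} {u : mor L} :
  Hom u A' B' -> dom h = prd X Y -> cod h = Uo B A' ->
  lsu (D2 G X Y h) ;; u = lsu (D2 G X Y (h ;; Um B u)).
Proof.
intros Hu Hh Hh'.
pose proof (D2_LSHom X Y (Uo B A') h Hh Hh') as HD.
assert (Hv : LSHom (mkLS (pr (p1 X Y) h) (lam Y) (lsu (D2 G X Y h)))
                   (prd X Y) (lam Y) (prd X (Uo B A')) (lam (Uo B A')))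
  by solve_LSHom.
assert (Hk : LSHom (T (pr (p1 X Y) h)) (prd X Y) (lam (prd X Y))
                   (prd X (Uo B A')) (lam (prd X (Uo B A'))))
  by (apply T_LSHom; solve_ob_eq).
assert (HT : LSHom (T (p2 X (Uo B A') ;; Um B u)) (prd X (Uo B A')) (lam (prd X (Uo B A')))
                   (Uo B B') (lam (Uo B B')))
  by (apply T_LSHom; solve_ob_eq).
rewrite <- (LScmp_wX_lsu Hv (g := p2 X (Uo B A') ;; Um B u) (s := A')) by solve_ob_eq.
rewrite <- (i2XY_T_linear X Hu), <- (LScmp_assoc Hv (i2XY_LSHom X _) HT).
rewrite <- i2XY_T_pr_p1, (LScmp_assoc (i2XY_LSHom X Y) Hk HT), <- T_cmp by solve_ob_eq.
assoc_l; rewrite pr_p2_eq by solve_ob_eq; reflexivity.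
Qed.

Lemma Dcal_ep X A : lsu (Dcal G X A) ;; ep B A = tm (wX B (prd X (Uo B A))) (idm A).
Proof.
unfold Dcal; rewrite (D2_cmp_linear X (Uo B A) _ (ep_hom B A)) by solve_ob_eq.
assoc_r; rewrite tri2; simpl_idm.
change (lsu (D2 G X (Uo B A) (p2 X (Uo B A))))
  with (lsu (LScmp (i2XY X (Uo B A)) (T (p2 X (Uo B A))))).
rewrite i2XY_T_p2; cbn [lsu]; rewrite t2; reflexivity.
Qed.

End Differential.

(** * The linear rule *)

Section LinearRule.
Context {G : GDSC}.
Local Notation B := (base G).

Lemma fibtens_wkX_LSid X A A' :
  fibtens X (wkX G X A) (LSid B X A')
  = mkLS (idm X) (tn (bang B A) A') (tm (wX B X) (tm (wA B A) (idm A'))).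
Proof.
unfold fibtens, wkX, LSid; cbn [lsf lssrc lsu]; f_equal.
rewrite (tm_assoc _ (wX B X)), <- (tm_assoc _ (wA B A)); assoc_r.
rewrite <- tm_cmp, <- tm_cmpl_idm, (sg_tm_unit (wX B X) (wA B A)) by solve_ob_eq; simpl_idm.
rewrite (tm_assoc _ (wX B X) (wA B A)), <- (tm_assoc _ (wX B X) (wX B X)).
rewrite <- tm_cmp, cX_wX_wX by solve_ob_eq; simpl_idm; reflexivity.
Qed.

Lemma deriv_derX X A :
  LScmp (deriv G X A) (derX G X A)
  = mkLS (idm X) (tn (bang B A) A) (tm (wX B X) (tm (wA B A) (idm A))).
Proof.
assert (HD : LSHom (Dcal G X A) (prd X (Uo B A)) (lam G (Uo B A))
                   (prd X (Uo B A)) (lam G (Uo B (bang B A))))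
  by (apply D2_LSHom; solve_ob_eq).
assert (HS : LSHom (Sigma G X A (Dcal G X A)) X (tn (bang B A) A) X (tn (bang B A) (bang B A))).
{ unfold Sigma; solve_LSHom. }
unfold deriv, mu, derX; rewrite tm_assoc, (LScmp_fibre_wX HS) by solve_ob_eq.
assert (HS' : LSHom (mkLS (lsf (Sigma G X A (Dcal G X A))) (lssrc (Sigma G X A (Dcal G X A)))
                          (lsu (Sigma G X A (Dcal G X A)) ;; tm (wA B A) (idm (bang B A))))
                    X (tn (bang B A) A) X (bang B A))
  by solve_LSHom.
rewrite (LScmp_fibre_wX HS') by solve_ob_eq.
apply LS_ext; cbn [lsf lssrc lsu]; [reflexivity | solve_ob_eq |].
unfold Sigma; cbn [lsu lssrc]; simpl_dom_cod; rewrite t2.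
assoc_r; rewrite (tm_unit_cmp (wA B A) (idm (bang B A))), <- (tm_cmp _ (idm (bang B A)))
  by solve_ob_eq; simpl_idm.
rewrite (cmp_assoc _ (tm (mm B X (Uo B A)) (idm A))), Dcal_ep by solve_ob_eq.
rewrite <- tm_cmpl_idm, mm_wX by solve_ob_eq; change (wX B (Uo B A)) with (wA B A).
rewrite (tm_assoc _ (wX B X) (wA B A)), <- (tm_assoc _ (wA B A) (wX B X)).
rewrite <- tm_cmp, (sg_tm_unit (wX B X) (wA B A)) by solve_ob_eq; simpl_idm.
rewrite (tm_assoc _ (wX B X)), <- (tm_assoc _ (wA B A) (wA B A)), (tm_assoc _ (idm (Fo B X))).
rewrite <- tm_cmp, <- tm_cmpl_idm by solve_ob_eq; unfold cA, wA; rewrite cX_wX_wX.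
simpl_idm; reflexivity.
Qed.

End LinearRule.

Theorem proposition4p30 (G : GDSC) (X : ob (cc (LC (base G)))) (A : ob (sc (LL (base G)))) :
  LScmp (deriv G X A) (derX G X A) = fibtens X (wkX G X A) (LSid (base G) X A).
Proof. rewrite deriv_derX, fibtens_wkX_LSid; reflexivity. Qed.
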